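(* Let $\mathcal{I}$ be a $\sigma$-ideal on $\mathbb{R}$ satisfying the standing assumptions. If an $\mathcal{I}$-Luzin set exists, then there exists a strong $\mathcal{I}$-Luzin set which is linearly independent over $\mathbb{Q}$.
   Context: Standing assumptions on $\mathcal{I}$: $\mathcal{I}$ is a $\sigma$-ideal of subsets of $\mathbb{R}$ such that $\mathbb{R}\notin\mathcal{I}$; $x+I\in\mathcal{I}$ and $xI\in\mathcal{I}$ for all $x\in\mathbb{R}$, $I\in\mathcal{I}$; every member of $\mathcal{I}$ is contained in a Borel member of $\mathcal{I}$; and for all Borel $A,B\notin\mathcal{I}$ the set $A-B$ has nonempty interior. A set $L\subseteq\mathbb{R}$ is $\mathcal{I}$-Luzin if $|L|=\mathfrak{c}$ and $L\cap I$ is countable for every $I\in\mathcal{I}$; it is strong $\mathcal{I}$-Luzin if moreover $L\cap B$ is uncountable for every Borel set $B\notin\mathcal{I}$. *)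

From Stdlib Require Import Reals QArith Qreals List.
Open Scope R_scope.

Definition set := R -> Prop.
Definition subset (A B : set) : Prop := forall x, A x -> B x.
Definition full : set := fun _ => True.
Definition empty : set := fun _ => False.

Definition is_open (A : set) : Prop :=
  forall x, A x -> exists eps, 0 < eps /\ forall y, Rabs (y - x) < eps -> A y.

Inductive borel : set -> Prop :=
  | borel_open : forall A, is_open A -> borel A
  | borel_compl : forall A, borel A -> borel (fun x => ~ A x)
  | borel_cunion : forall F : nat -> set, (forall n, borel (F n)) ->
      borel (fun x => exists n, F n x)
  | borel_ext : forall A B, borel A -> (forall x, A x <-> B x) -> borel B.

Definition translate (x : R) (A : set) : set := fun z => exists y, A y /\ z = x + y.
Definition scale (x : R) (A : set) : set := fun z => exists y, A y /\ z = x * y.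
Definition setdiff_alg (A B : set) : set := fun z => exists a b, A a /\ B b /\ z = a - b.
Definition nonempty_interior (A : set) : Prop :=
  exists x eps, 0 < eps /\ forall y, Rabs (y - x) < eps -> A y.

Definition sigma_ideal (I : set -> Prop) : Prop :=
  I empty /\
  (forall A B, I B -> subset A B -> I A) /\
  (forall F : nat -> set, (forall n, I (F n)) -> I (fun x => exists n, F n x)).

Definition standing_assumptions (I : set -> Prop) : Prop :=
  sigma_ideal I /\
  ~ I full /\
  (forall x A, I A -> I (translate x A)) /\
  (forall x A, I A -> I (scale x A)) /\
  (forall A, I A -> exists B, borel B /\ I B /\ subset A B) /\
  (forall A B, borel A -> borel B -> ~ I A -> ~ I B ->
     nonempty_interior (setdiff_alg A B)).

Definition countable (A : set) : Prop :=
  exists f : R -> nat, forall x y, A x -> A y -> f x = f y -> x = y.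

Definition card_continuum (A : set) : Prop :=
  exists f : R -> R, (forall x, A (f x)) /\
    (forall x y, f x = f y -> x = y) /\
    (forall y, A y -> exists x, f x = y).

Definition I_Luzin (I : set -> Prop) (L : set) : Prop :=
  card_continuum L /\ forall A, I A -> countable (fun x => L x /\ A x).

Definition strong_I_Luzin (I : set -> Prop) (L : set) : Prop :=
  I_Luzin I L /\ forall B, borel B -> ~ I B -> ~ countable (fun x => L x /\ B x).

Definition lin_indep_Q (L : set) : Prop :=
  forall l : list (Q * R),
    NoDup (map snd l) ->
    Forall (fun p => L (snd p)) l ->
    fold_right (fun p s => Q2R (fst p) * snd p + s) 0 l = 0 ->
    Forall (fun p => Qeq (fst p) 0%Q) l.

(* Fix an I-Luzin set L, a well-order of type the continuum c whose initial segments are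
   smaller than c, and a labelling of its elements by Borel codes in which each code recurs c
   times.  By transfinite recursion choose x_b in (L + Q) and in the set coded at b, outside
   the Q-span of the earlier points.  Such a point exists: by the Steinhaus property the
   complement of Q + B is in I, so all but countably many points of L are rational translates
   of points of B; were they all in the span, L would inject into the set of rational
   combinations of fewer than c points.  The x_b are Q-independent, lie in L + Q, which meets
   every member of I in a countable set, and every Borel set outside I contains c of them. *)

From Stdlib Require Import Reals QArith Qreals List Lia Lra ZArith.
From Stdlib Require Import Classical ClassicalEpsilon FunctionalExtensionality.
From Stdlib Require Import ProofIrrelevance PropExtensionality.
From Stdlib Require Cantor.
From mathcomp Require ssreflect ssrbool eqtype boolp wochoice.
Open Scope R_scope.

Definition injects (A B : Type) : Prop :=
  exists f : A -> B, forall x y, f x = f y -> x = y.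

Lemma injects_trans A B C : injects A B -> injects B C -> injects A C.
Proof. intros [f Hf] [g Hg]. exists (fun a => g (f a)). auto. Qed.

Lemma left_inverse {A B} (f : A -> B) (a0 : A) :
  (forall x y, f x = f y -> x = y) -> {g : B -> A | forall a, g (f a) = a}.
Proof.
  intros Hf.
  exists (fun b => match excluded_middle_informative (exists a, f a = b) with
     | left H => proj1_sig (constructive_indefinite_description _ H)
     | right _ => a0 end).
  intros a. destruct (excluded_middle_informative _) as [H|H].
  - destruct (constructive_indefinite_description _ H) as [x Hx]; simpl. auto.
  - exfalso; apply H; eauto.
Qed.

Lemma well_founded_min (E : Type) (lt : E -> E -> Prop) : well_founded lt ->
  forall P : E -> Prop, (exists x, P x) -> exists x, P x /\ forall y, lt y x -> ~ P y.
Proof.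
  intros wf P [x Px]. revert Px. induction x as [x IH] using (well_founded_induction wf).
  intros Px. destruct (classic (exists y, lt y x /\ P y)) as [[y [Hy Py]]|H].
  - apply (IH y Hy Py).
  - exists x; split; auto. intros y Hy Py; apply H; eauto.
Qed.

Lemma sig_eq {A} {P : A -> Prop} (x y : {a | P a}) : proj1_sig x = proj1_sig y -> x = y.
Proof. destruct x, y; simpl; intros; subst. f_equal. apply proof_irrelevance. Qed.

Lemma set_ext (A B : set) : (forall x, A x <-> B x) -> A = B.
Proof.
  intros H. apply functional_extensionality; intro x. apply propositional_extensionality; auto.
Qed.

Lemma Cantor_to_nat_inj p p' : Cantor.to_nat p = Cantor.to_nat p' -> p = p'.
Proof. intros H. apply (f_equal Cantor.of_nat) in H. now rewrite !Cantor.cancel_of_to in H. Qed.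

Definition code_Z (z : Z) : nat := Cantor.to_nat (Z.to_nat z, Z.to_nat (- z)).

Lemma code_Z_inj x y : code_Z x = code_Z y -> x = y.
Proof. unfold code_Z. intros H. apply Cantor_to_nat_inj in H. inversion H. lia. Qed.

Definition code_Q (q : Q) : nat := Cantor.to_nat (code_Z (Qnum q), Pos.to_nat (Qden q)).

Lemma code_Q_inj x y : code_Q x = code_Q y -> x = y.
Proof.
  destruct x as [a b], y as [c d]. unfold code_Q. intros H. apply Cantor_to_nat_inj in H.
  inversion H as [[H1 H2]]. apply code_Z_inj in H1. apply Pos2Nat.inj in H2. now subst.
Qed.

Fixpoint code_list {X} (c : X -> nat) (l : list X) : nat :=
  match l with nil => 0%nat | x :: l => S (Cantor.to_nat (c x, code_list c l)) end.

Lemma code_list_inj X (c : X -> nat) : (forall x y, c x = c y -> x = y) ->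
  forall l1 l2, code_list c l1 = code_list c l2 -> l1 = l2.
Proof.
  intros Hc l1; induction l1; destruct l2; cbn [code_list]; intros H; try discriminate; auto.
  apply (f_equal pred) in H; cbn [pred] in H. apply Cantor_to_nat_inj in H.
  inversion H. f_equal; auto.
Qed.

Definition Q_of_nat : nat -> Q := proj1_sig (left_inverse code_Q 0%Q code_Q_inj).

Lemma Q_of_nat_code q : Q_of_nat (code_Q q) = q.
Proof. exact (proj2_sig (left_inverse code_Q 0%Q code_Q_inj) q). Qed.

(** * Finite rational combinations *)

(* A combination over [B] is a finite list of rational coefficients attached either to an
   element of [B] or to a natural-number tag; the tags let one also encode countably many
   exceptional points and the nesting of combinations. *)
Definition Fcomb (B : Type) := list ((B + nat) * Q).

(* [small B] means |B| < c; phrasing it through combinations avoids cardinal arithmetic. *)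
Definition small (B : Type) : Prop := ~ injects R (Fcomb B).

Section Flatten.
Variables (A B : Type) (f : A -> Fcomb B).
Hypothesis f_inj : forall x y, f x = f y -> x = y.

(* Each item is preceded by a header recording its kind, coefficient and length. *)
Definition flatten_item (p : (A + nat) * Q) : Fcomb B :=
  match p with
  | (inl a, q) => (inr 0%nat, q) :: (inr (length (f a)), 0%Q) :: f a
  | (inr n, q) => (inr 1%nat, q) :: (inr n, 0%Q) :: nil
  end.

Definition flatten (l : Fcomb A) : Fcomb B := flat_map flatten_item l.

Lemma app_length_inj (X : Type) (l1 l2 r1 r2 : list X) :
  length l1 = length l2 -> l1 ++ r1 = l2 ++ r2 -> l1 = l2 /\ r1 = r2.
Proof.
  revert l2; induction l1; destruct l2; simpl; intros; try discriminate; auto.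
  inversion H0; subst. destruct (IHl1 l2); auto. now subst.
Qed.

Lemma flatten_item_inj a b r1 r2 :
  flatten_item a ++ r1 = flatten_item b ++ r2 -> a = b /\ r1 = r2.
Proof.
  destruct a as [[a|n] q], b as [[b|m] q']; simpl; intro H; inversion H; subst; auto.
  destruct (app_length_inj _ _ _ _ _ H2 H3) as [H5 H6]. rewrite (f_inj _ _ H5). auto.
Qed.

Lemma flatten_inj l1 l2 : flatten l1 = flatten l2 -> l1 = l2.
Proof.
  revert l2; induction l1 as [|a l1 IH]; destruct l2 as [|b l2]; simpl; intros H; auto.
  - destruct b as [[b|m] q]; discriminate.
  - destruct a as [[a|m] q]; discriminate.
  - destruct (flatten_item_inj a b _ _ H). subst. f_equal; auto.
Qed.
End Flatten.

Lemma injects_Fcomb_flatten A B : injects A (Fcomb B) -> injects (Fcomb A) (Fcomb B).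
Proof. intros [f Hf]. exists (flatten A B f). now apply flatten_inj. Qed.

Lemma map_inj_on {X Y} (f : X -> Y) (P : X -> Prop) :
  (forall a b, P a -> P b -> f a = f b -> a = b) ->
  forall l1 l2, Forall P l1 -> Forall P l2 -> map f l1 = map f l2 -> l1 = l2.
Proof.
  intros Hf l1; induction l1; destruct l2; simpl; intros H1 H2 H; try discriminate; auto.
  inversion H; inversion H1; inversion H2; subst. f_equal; auto.
Qed.

Lemma injects_Fcomb_map A B : injects A B -> injects (Fcomb A) (Fcomb B).
Proof.
  intros [f Hf].
  exists (map (fun p => (match fst p with inl a => inl (f a) | inr n => inr n end, snd p))).
  intros l1 l2. apply (map_inj_on _ (fun _ => True)); try (apply Forall_forall; auto).
  intros [[a|n] q] [[b|m] q'] _ _ H; simpl in H; inversion H; subst; auto.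
  rewrite (Hf _ _ H1); auto.
Qed.

Lemma Fcomb_Empty_countable : injects (Fcomb Empty_set) nat.
Proof.
  exists (code_list (fun p : (Empty_set + nat) * Q => match p with
     | (inl e, _) => match e with end
     | (inr n, q) => Cantor.to_nat (n, code_Q q) end)).
  apply code_list_inj. intros [[e|n] q] [[e'|n'] q'] H; try destruct e; try destruct e'.
  apply Cantor_to_nat_inj in H. inversion H as [[H1 H2]]. apply code_Q_inj in H2. now subst.
Qed.

(** * The continuum is uncountable *)

Definition bits := nat -> bool.

Lemma bits_uncountable : ~ injects bits nat.
Proof.
  intros [f Hf]. destruct (left_inverse f (fun _ => true) Hf) as [g Hg].
  set (d := fun n => negb (g n n)).
  assert (E := f_equal (fun h => h (f d)) (Hg d)). simpl in E.
  change (d (f d)) with (negb (g (f d) (f d))) in E.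
  destruct (g (f d) (f d)); discriminate.
Qed.

(* Base 4 with digits 0 and 1 leaves gaps, so distinct bit sequences give distinct reals. *)
Fixpoint bits_psum (s : bits) (n : nat) : R :=
  match n with O => 0 | S k => bits_psum s k + (if s k then (/4)^(S k) else 0) end.

Lemma pow_inv4_pos n : 0 < (/4)^n.
Proof. apply pow_lt; lra. Qed.

Lemma bits_psum_le_add s n m : bits_psum s n <= bits_psum s (n + m).
Proof.
  induction m; [rewrite Nat.add_0_r; lra|].
  rewrite Nat.add_succ_r. simpl. assert (H := pow_inv4_pos (S (n+m))). simpl in H.
  destruct (s (n+m)%nat); lra.
Qed.

Lemma bits_psum_add_le s n m :
  bits_psum s (n + m) <= bits_psum s n + /3 * (/4)^n - /3 * (/4)^(n+m).
Proof.
  induction m; [rewrite Nat.add_0_r; lra|].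
  rewrite Nat.add_succ_r. simpl. assert (H := pow_inv4_pos (n+m)).
  destruct (s (n+m)%nat); lra.
Qed.

Lemma bits_psum_bound s : bound (fun y => exists n, y = bits_psum s n).
Proof.
  exists (/3). intros y [n ->]. assert (H := bits_psum_add_le s 0 n). simpl in H.
  assert (H' := pow_inv4_pos n). lra.
Qed.

Definition bits_real (s : bits) : R :=
  proj1_sig (completeness _ (bits_psum_bound s) (ex_intro _ 0 (ex_intro _ O eq_refl))).

Lemma bits_psum_le_real s n : bits_psum s n <= bits_real s.
Proof.
  unfold bits_real. destruct (completeness _ _ _) as [m [Hm1 Hm2]]. simpl.
  apply Hm1. now exists n.
Qed.

Lemma bits_real_le_psum s n : bits_real s <= bits_psum s n + /3 * (/4)^n.
Proof.
  unfold bits_real. destruct (completeness _ _ _) as [m [Hm1 Hm2]]. simpl.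
  apply Hm2. intros y [k ->]. destruct (Compare_dec.le_lt_dec n k).
  - replace k with (n + (k - n))%nat by lia. assert (H := bits_psum_add_le s n (k - n)).
    assert (H' := pow_inv4_pos (n + (k-n))). lra.
  - replace n with (k + (n - k))%nat by lia. assert (H := bits_psum_le_add s k (n - k)).
    assert (H' := pow_inv4_pos (k + (n-k))). lra.
Qed.

Lemma bits_psum_agree s t n :
  (forall k, (k < n)%nat -> s k = t k) -> bits_psum s n = bits_psum t n.
Proof.
  induction n; simpl; intros H; auto. rewrite IHn by (intros; apply H; lia).
  rewrite (H n) by lia. auto.
Qed.

Lemma bits_real_lt s t n : (forall k, (k < n)%nat -> s k = t k) ->
  s n = true -> t n = false -> bits_real t < bits_real s.
Proof.
  intros H Hs Ht. assert (E := bits_psum_agree s t n H).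
  assert (A1 := bits_psum_le_real s (S n)). assert (A2 := bits_real_le_psum t (S n)).
  simpl in A1, A2. rewrite Hs in A1. rewrite Ht in A2.
  assert (P := pow_inv4_pos (S n)). simpl in P. lra.
Qed.

Lemma bits_real_inj s t : bits_real s = bits_real t -> s = t.
Proof.
  intros E. apply NNPP; intro ne.
  assert (ex : exists n, s n <> t n).
  { apply NNPP; intro H. apply ne, functional_extensionality. intro n.
    apply NNPP; intro H'. apply H; eauto. }
  destruct (well_founded_min _ _ Wf_nat.lt_wf _ ex) as [n [Hn Hmin]].
  assert (agree : forall k, (k < n)%nat -> s k = t k).
  { intros k Hk. apply NNPP; intro; eapply Hmin; eauto. }
  destruct (s n) eqn:Es, (t n) eqn:Et; try congruence.
  - assert (L := bits_real_lt s t n agree Es Et). lra.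
  - assert (L := bits_real_lt t s n (fun k Hk => eq_sym (agree k Hk)) Et Es). lra.
Qed.

Lemma R_not_countable : ~ injects R nat.
Proof.
  intro H. apply bits_uncountable. eapply injects_trans; [|exact H].
  exists bits_real. exact bits_real_inj.
Qed.

(** * Borel codes *)

Lemma exists_Q_between (a b : R) : a < b -> exists q : Q, a < Q2R q < b.
Proof.
  intros Hab. set (eps := b - a). assert (He : 0 < eps) by (unfold eps; lra).
  set (n := Z.to_nat (up (/ eps))).
  destruct (archimed (/ eps)) as [A1 A2].
  assert (Hie : 0 < / eps) by (apply Rinv_0_lt_compat; lra).
  assert (Hn : INR n = IZR (up (/eps))).
  { unfold n. rewrite INR_IZR_INZ, Z2Nat.id; auto. apply le_IZR. lra. }
  set (N := INR n + 1).
  assert (HNe : N * eps > 1).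
  { assert (HN : N > / eps) by (unfold N; lra).
    apply Rmult_gt_compat_r with (r := eps) in HN; auto. rewrite Rinv_l in HN; lra. }
  set (z := up (a * N)). destruct (archimed (a * N)) as [B1 B2].
  exists (z # Pos.of_succ_nat n).
  unfold Q2R. cbn [Qnum Qden]. rewrite Zpos_P_of_succ_nat, succ_IZR, <- INR_IZR_INZ.
  fold N. assert (HN0 : 0 < N) by (unfold N; assert (0 <= INR n) by apply pos_INR; lra).
  set (y := IZR z * / N).
  assert (Ny : N * y = IZR z) by (unfold y; field; lra).
  fold z in B1, B2. unfold eps in HNe. split; nra.
Qed.

Definition code_QQ (p : Q * Q) : nat := Cantor.to_nat (code_Q (fst p), code_Q (snd p)).

Lemma code_QQ_inj x y : code_QQ x = code_QQ y -> x = y.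
Proof.
  destruct x as [a b], y as [c d]. unfold code_QQ. intros H. apply Cantor_to_nat_inj in H.
  inversion H as [[H1 H2]]. apply code_Q_inj in H1. apply code_Q_inj in H2. now subst.
Qed.

Definition QQ_of_nat : nat -> Q * Q := proj1_sig (left_inverse code_QQ (0, 0)%Q code_QQ_inj).

Lemma QQ_of_nat_code p : QQ_of_nat (code_QQ p) = p.
Proof. exact (proj2_sig (left_inverse code_QQ (0, 0)%Q code_QQ_inj) p). Qed.

Inductive bcode : Type :=
 | BOpen (s : bits) | BCompl (c : bcode) | BUnion (f : nat -> bcode).

Fixpoint decode (c : bcode) : set :=
  match c with
  | BOpen s => fun x => exists n, s n = true /\
      Q2R (fst (QQ_of_nat n)) < x < Q2R (snd (QQ_of_nat n))
  | BCompl c => fun x => ~ decode c x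
  | BUnion f => fun x => exists n, decode (f n) x
  end.

Lemma open_decode A : is_open A -> exists c, decode c = A.
Proof.
  intros HA.
  exists (BOpen (fun n => if excluded_middle_informative (forall y,
    Q2R (fst (QQ_of_nat n)) < y < Q2R (snd (QQ_of_nat n)) -> A y) then true else false)).
  apply set_ext; intro x; simpl; split.
  - intros [n [Hn Hx]]. destruct (excluded_middle_informative _) as [H|H]; try discriminate.
    auto.
  - intros Ax. destruct (HA x Ax) as [eps [He Hb]].
    destruct (exists_Q_between (x - eps) x) as [a Ha]; [lra|].
    destruct (exists_Q_between x (x + eps)) as [b Hb']; [lra|].
    exists (code_QQ (a, b)). rewrite QQ_of_nat_code. cbn [fst snd]. split; [|lra].
    destruct (excluded_middle_informative _) as [H|H]; auto. exfalso; apply H.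
    intros y Hy. apply Hb. apply Rabs_def1; lra.
Qed.

Lemma borel_decode A : borel A -> exists c, decode c = A.
Proof.
  induction 1 as [A HA|A HA IH|F HF IH|A B HA IH HAB].
  - now apply open_decode.
  - destruct IH as [c Hc]. exists (BCompl c). simpl. now rewrite Hc.
  - destruct (choice (fun n c => decode c = F n) IH) as [f Hf].
    exists (BUnion f). simpl. apply set_ext; intro x.
    split; intros [n Hn]; exists n; congruence.
  - destruct IH as [c Hc]. exists c. rewrite Hc. now apply set_ext.
Qed.

(* The label of the node of [c] reached along [p]; at an open-set leaf the next step of
   [p] reads a bit. *)
Fixpoint bcode_path (c : bcode) (p : list nat) : nat :=
  match c, p with
  | BOpen s, nil => 1%nat
  | BOpen s, n :: _ => if s n then 1%nat else 0%nat
  | BCompl c, nil => 2%nat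
  | BCompl c, _ :: p => bcode_path c p
  | BUnion f, nil => 3%nat
  | BUnion f, n :: p => bcode_path (f n) p
  end.

Lemma bcode_path_inj c d : (forall p, bcode_path c p = bcode_path d p) -> c = d.
Proof.
  revert d; induction c as [s|c IH|f IH]; destruct d as [s'|d|f']; intros H;
    try (specialize (H nil); simpl in H; discriminate).
  - f_equal. apply functional_extensionality; intro n. specialize (H (n :: nil)). simpl in H.
    destruct (s n), (s' n); auto; discriminate.
  - f_equal. apply IH. intro p. exact (H (0%nat :: p)).
  - f_equal. apply functional_extensionality; intro n. apply IH. intro p. exact (H (n :: p)).
Qed.

Lemma code_nat_list_inj l1 l2 :
  code_list (fun n : nat => n) l1 = code_list (fun n => n) l2 -> l1 = l2.
Proof. now apply code_list_inj. Qed.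

Definition nat_list_of_nat : nat -> list nat :=
  proj1_sig (left_inverse (code_list (fun n => n)) nil code_nat_list_inj).

Lemma nat_list_of_nat_code l : nat_list_of_nat (code_list (fun n => n) l) = l.
Proof. exact (proj2_sig (left_inverse _ nil code_nat_list_inj) l). Qed.

Definition bcode_bits (c : bcode) : bits := fun m =>
  let (a, b) := Cantor.of_nat m in Nat.eqb (bcode_path c (nat_list_of_nat a)) b.

Lemma bcode_bits_inj c d : bcode_bits c = bcode_bits d -> c = d.
Proof.
  intros H. apply bcode_path_inj. intro p.
  set (m := Cantor.to_nat (code_list (fun n => n) p, bcode_path c p)).
  assert (E := f_equal (fun h => h m) H). cbv beta in E. unfold bcode_bits, m in E.
  rewrite Cantor.cancel_of_to, nat_list_of_nat_code, Nat.eqb_refl in E.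
  symmetry in E. now apply Nat.eqb_eq in E.
Qed.

Definition interleave (a t : bits) : bits :=
  fun n => if Nat.even n then a (Nat.div2 n) else t (Nat.div2 n).

Definition evens (s : bits) : bits := fun n => s (2 * n)%nat.

Lemma evens_interleave a t : evens (interleave a t) = a.
Proof.
  apply functional_extensionality; intro n. unfold evens, interleave.
  now rewrite Nat.even_even, Nat.div2_double.
Qed.

Lemma interleave_inj a t t' : interleave a t = interleave a t' -> t = t'.
Proof.
  intros H. apply functional_extensionality; intro n.
  assert (E := f_equal (fun h => h (S (2 * n))) H). cbv beta in E. unfold interleave in E.
  now rewrite Nat.even_succ, Nat.odd_mul, Nat.div2_succ_double in E.
Qed.

Lemma bcode_uncountable_fibers :
  exists k : R -> bcode, forall c, ~ countable (fun r => k r = c).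
Proof.
  destruct (left_inverse bits_real (fun _ => true) bits_real_inj) as [phi Hphi].
  destruct (left_inverse bcode_bits (BOpen (fun _ => true)) bcode_bits_inj) as [dec Hdec].
  exists (fun r => dec (evens (phi r))).
  intros c [g Hg]. apply bits_uncountable.
  exists (fun t => g (bits_real (interleave (bcode_bits c) t))). intros t t' Heq.
  assert (F : forall u, dec (evens (phi (bits_real (interleave (bcode_bits c) u)))) = c).
  { intro u. now rewrite Hphi, evens_interleave, Hdec. }
  apply (Hg _ _ (F t) (F t')), bits_real_inj in Heq.
  eapply interleave_inj; eauto.
Qed.

Lemma borel_shift A c : borel A -> borel (fun x => A (x + c)).
Proof.
  intros HA; induction HA as [A HA|A HA IH|F HF IH|A B HA IH HAB].
  - apply borel_open. intros x Hx. destruct (HA _ Hx) as [eps [He Hb]].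
    exists eps; split; auto. intros y Hy. apply Hb.
    now replace (y + c - (x + c)) with (y - x) by ring.
  - now apply borel_compl.
  - now apply borel_cunion.
  - eapply borel_ext; [apply IH|]. intro x; apply HAB.
Qed.

Definition Qsat (B : set) : set := fun z => exists q : Q, B (z + Q2R q).

Lemma borel_Qsat B : borel B -> borel (Qsat B).
Proof.
  intros HB. eapply borel_ext.
  - apply (borel_cunion (fun n z => B (z + Q2R (Q_of_nat n)))). intro n. now apply borel_shift.
  - intro x; split; intros [n Hn].
    + now exists (Q_of_nat n).
    + exists (code_Q n). now rewrite Q_of_nat_code.
Qed.

Definition Qtranslates (L : set) : set := fun y => exists l q, L l /\ y = l + Q2R q.

Section StandingAssumptions.
Variable I : set -> Prop.
Hypothesis HI : standing_assumptions I.

(* [Qsat B - ~ Qsat B] contains no rational, so by the Steinhaus property one of the two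
   sets is in [I], and it is not [Qsat B], which contains [B]. *)
Lemma Qsat_compl_null B : borel B -> ~ I B -> I (fun z => ~ Qsat B z).
Proof.
  intros HB nB. destruct HI as [[_ [Isub _]] [_ [_ [_ [_ Istein]]]]].
  apply NNPP; intro nN.
  assert (nE : ~ I (Qsat B)).
  { intro H. apply nB, (Isub _ _ H). intros x Bx. exists 0%Q.
    now rewrite RMicromega.Q2R_0, Rplus_0_r. }
  destruct (Istein _ _ (borel_Qsat B HB) (borel_compl _ (borel_Qsat B HB)) nE nN)
    as [x [eps [He Hb]]].
  destruct (exists_Q_between x (x + eps)) as [r Hr]; [lra|].
  destruct (Hb (Q2R r)) as [a [b [[q Ha] [Nb E]]]]; [apply Rabs_def1; lra|].
  apply Nb. exists (r + q)%Q. rewrite Q2R_plus.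
  now replace (b + (Q2R r + Q2R q)) with (a + Q2R q) by lra.
Qed.

Lemma Qtranslates_countable_null L : (forall A, I A -> countable (fun x => L x /\ A x)) ->
  forall A, I A -> countable (fun y => Qtranslates L y /\ A y).
Proof.
  intros Luz A HA. destruct HI as [_ [_ [Itr _]]].
  assert (cq : forall q : Q, exists c : R -> nat, forall x y,
     L x /\ translate (- Q2R q) A x -> L y /\ translate (- Q2R q) A y -> c x = c y -> x = y).
  { intro q. apply Luz, Itr, HA. }
  destruct (choice _ cq) as [c Hc].
  assert (dec : forall y, exists p : R * Q,
    Qtranslates L y -> L (fst p) /\ y = fst p + Q2R (snd p)).
  { intro y. destruct (classic (Qtranslates L y)) as [[l [q H]]|H].
    - now exists (l, q).
    - exists (0, 0%Q); intro; contradiction. }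
  destruct (choice _ dec) as [p Hp].
  exists (fun y => Cantor.to_nat (code_Q (snd (p y)), c (snd (p y)) (fst (p y)))).
  intros y1 y2 [L1 A1] [L2 A2] H.
  destruct (Hp y1 L1) as [Hl1 E1], (Hp y2 L2) as [Hl2 E2].
  apply Cantor_to_nat_inj in H. inversion H as [[Hq Hc']]. apply code_Q_inj in Hq.
  rewrite Hq in Hc'.
  assert (Hl : fst (p y1) = fst (p y2)).
  { apply (Hc (snd (p y2))); auto; split; auto.
    - exists y1; split; auto. rewrite <- Hq. lra.
    - exists y2; split; auto. lra. }
  rewrite E1, E2, Hl, Hq. reflexivity.
Qed.
End StandingAssumptions.

(** * An initial ordinal of the continuum *)

Definition strict_well_order {T : Type} (lt : T -> T -> Prop) : Prop :=
  well_founded lt /\ (forall a b c, lt a b -> lt b c -> lt a c) /\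
  (forall a b, lt a b \/ a = b \/ lt b a).

Module WellOrdering.
Import ssreflect ssrbool eqtype boolp wochoice.

Lemma strict_well_order_exists (T : Type) : exists lt : T -> T -> Prop, strict_well_order lt.
Proof.
have [R wR] := well_ordering_principle (classicType T).
have woR : wo_chain R predT by move=> A _; apply: wR.
have Rtot := wo_chainW woR; have Ranti := wo_chain_antisymmetric woR.
have Rmin P : (exists x, P x) -> exists z, P z /\ forall x, P x -> R z x.
  move=> [x Px]; have [|z [[zin zlb] _]] := wR [pred x | `[< P x >]].
    by exists x; rewrite inE; apply/asboolP.
  exists z; split; first by move: zin; rewrite inE => /asboolP.
  by move=> y Py; apply: zlb; rewrite inE; apply/asboolP.
have anti x y : R x y -> R y x -> x = y by move=> xy yx; apply: Ranti; rewrite ?xy.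
have Rtrans a b c : R a b -> R b c -> R a c.
  move=> ab bc; have [|z [zin zlb]] := Rmin (fun x => x = a \/ x = b \/ x = c).
    by exists a; left.
  have aA : a = a \/ a = b \/ a = c by left.
  have bB : b = a \/ b = b \/ b = c by right; left.
  case: zin => [e|[e|e]]; subst z; first by apply: zlb; right; right.
    by rewrite (anti a b ab (zlb a aA)).
  have ecb := anti c b (zlb b bB) bc; subst c.
  by rewrite (anti a b ab (zlb a aA)).
exists (fun a b => R a b /\ a <> b); split; [|split].
- move=> x0; apply: NNPP => nacc.
  have [|z [nz zlb]] := Rmin (fun x => ~ Acc (fun a b => R a b /\ a <> b) x).
    by exists x0.
  apply: nz; constructor => y [yz ne]; apply: NNPP => ny.
  by apply: ne; apply: anti => //; apply: zlb.
- move=> a b c [ab nab] [bc nbc]; split; first exact: Rtrans ab bc.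
  by move=> eac; subst c; apply: nab; apply: anti.
- move=> a b; case: (pselect (a = b)) => [|ne]; first by right; left.
  by case/orP: (Rtot a b isT isT) => h; [left|right; right; split=> // e; apply: ne].
Qed.
End WellOrdering.

Lemma small_of_injects_Fcomb A X : injects A (Fcomb X) -> small X -> small A.
Proof.
  intros HA HX HR. apply HX. eapply injects_trans; [exact HR|].
  now apply injects_Fcomb_flatten.
Qed.

Lemma small_Empty_set : small Empty_set.
Proof.
  intro H. apply R_not_countable. eapply injects_trans; [exact H|exact Fcomb_Empty_countable].
Qed.

Section SmallSegments.
Variables (W : Type) (ltW : W -> W -> Prop).
Hypothesis woW : strict_well_order ltW.

Let wfW := proj1 woW.
Let totW := proj2 (proj2 woW).

Lemma ltW_irrefl a : ~ ltW a a.
Proof. intro H. induction (wfW a) as [a _ IH]. exact (IH a H H). Qed.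

Definition small_below (w : W) : Prop := small {v | ltW v w}.

Definition Wsmall := {w | small_below w}.

(* Combinations of indices with small initial segments are ordered first by their largest
   index ([None] when there is none), ties being broken by an arbitrary well-order; a
   combination below [l] only involves indices up to the largest one of [l], which keeps the
   segments small. *)
Definition ltO (o1 o2 : option Wsmall) : Prop :=
  match o1, o2 with
  | None, Some _ => True
  | Some a, Some b => ltW (proj1_sig a) (proj1_sig b)
  | _, _ => False
  end.

Definition leO o1 o2 := ltO o1 o2 \/ o1 = o2.

Lemma ltO_trans a b c : ltO a b -> ltO b c -> ltO a c.
Proof.
  destruct a as [a|], b as [b|], c as [c|]; simpl; try tauto. apply (proj1 (proj2 woW)).
Qed.

Lemma leO_trans a b c : leO a b -> leO b c -> leO a c.
Proof.
  intros [H|<-] [H'|<-]; unfold leO; auto. left; eapply ltO_trans; eauto.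
Qed.

Lemma ltO_total a b : ltO a b \/ a = b \/ ltO b a.
Proof.
  destruct a as [a|], b as [b|]; simpl; auto.
  destruct (totW (proj1_sig a) (proj1_sig b)) as [H|[H|H]]; auto.
  right; left; f_equal; now apply sig_eq.
Qed.

Lemma ltO_wf : well_founded ltO.
Proof.
  assert (Hnone : Acc ltO None) by (constructor; intros [c|]; simpl; tauto).
  assert (HS : forall w (a : Wsmall), proj1_sig a = w -> Acc ltO (Some a)).
  { intro w. induction w as [w IH] using (well_founded_induction wfW).
    intros a Ha. constructor. intros [b|] Hb; simpl in Hb; auto.
    apply (IH (proj1_sig b)); congruence. }
  intros [a|]; eauto.
Qed.

Definition maxO (o1 o2 : option Wsmall) : option Wsmall :=
  match o1, o2 with
  | None, o => o
  | o, None => o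
  | Some a, Some b =>
      if excluded_middle_informative (ltW (proj1_sig a) (proj1_sig b)) then Some b else Some a
  end.

Lemma leO_maxO_l a b : leO a (maxO a b).
Proof.
  unfold leO; destruct a as [a|], b as [b|]; simpl; auto.
  destruct (excluded_middle_informative _); auto.
Qed.

Lemma leO_maxO_r a b : leO b (maxO a b).
Proof.
  unfold leO; destruct a as [a|], b as [b|]; simpl; auto.
  destruct (excluded_middle_informative _) as [H|H]; auto.
  destruct (totW (proj1_sig a) (proj1_sig b)) as [H1|[H1|H1]]; try contradiction; auto.
  right; f_equal; now apply sig_eq.
Qed.

Fixpoint max_index (l : Fcomb Wsmall) : option Wsmall :=
  match l with
  | nil => None
  | (inl d, _) :: l => maxO (Some d) (max_index l)
  | (inr _, _) :: l => max_index l
  end.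

Lemma max_index_ge l d q : In (inl d, q) l -> leO (Some d) (max_index l).
Proof.
  induction l as [|[[e|n] q'] l IH]; cbn [max_index In]; intros H; try contradiction.
  - destruct H as [H|H].
    + inversion H; subst. apply leO_maxO_l.
    + eapply leO_trans; [eapply IH; eauto|apply leO_maxO_r].
  - destruct H as [H|H]; [discriminate|eauto].
Qed.

Variable ltZ : Fcomb Wsmall -> Fcomb Wsmall -> Prop.
Hypothesis woZ : strict_well_order ltZ.

Definition lt_comb (l l' : Fcomb Wsmall) : Prop :=
  ltO (max_index l) (max_index l') \/ (max_index l = max_index l' /\ ltZ l l').

Lemma lt_comb_strict_well_order : strict_well_order lt_comb.
Proof.
  destruct woZ as [wfZ [trZ totZ]]. split; [|split].
  - assert (H : forall o l, max_index l = o -> Acc lt_comb l).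
    { intro o. induction o as [o IH] using (well_founded_induction ltO_wf).
      intros l Hl. subst o. induction l as [l IHl] using (well_founded_induction wfZ).
      constructor. intros l' [H0|[H1 H2]]; [eapply IH; eauto|].
      apply IHl; [exact H2|]. intros y Hy; apply IH; congruence. }
    intro l; eapply H; eauto.
  - intros a b c [H|[H1 H2]] [H'|[H1' H2']]; unfold lt_comb.
    + left; eapply ltO_trans; eauto.
    + left; congruence.
    + left; congruence.
    + right; split; [congruence|eauto].
  - intros a b. unfold lt_comb.
    destruct (ltO_total (max_index a) (max_index b)) as [H|[H|H]]; auto.
    destruct (totZ a b) as [H'|[H'|H']]; auto.
Qed.

Lemma max_index_below l b :
  lt_comb l b -> forall d q, In (inl d, q) l -> leO (Some d) (max_index b).
Proof.
  intros Hl d q Hin. eapply leO_trans; [eapply max_index_ge; eauto|].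
  destruct Hl as [H|[H _]]; [now left|now right].
Qed.

Lemma segment_small_max_none b : max_index b = None -> small {l | lt_comb l b}.
Proof.
  intros Hb. apply (small_of_injects_Fcomb _ Empty_set); [|exact small_Empty_set].
  set (h := fun it : (Wsmall + nat) * Q =>
    (match fst it with inl _ => @inr Empty_set nat 0%nat | inr n => inr n end, snd it)).
  exists (fun l => map h (proj1_sig l)). intros [l1 H1] [l2 H2] E. apply sig_eq; simpl in *.
  assert (nodata : forall l, lt_comb l b -> Forall (fun it => exists n, fst it = inr n) l).
  { intros l Hl. apply Forall_forall. intros [[d|n] q] Hin; cbn [fst]; eauto.
    assert (A := max_index_below l b Hl d q Hin). rewrite Hb in A.
    destruct A as [A|A]; [contradiction|discriminate]. }
  apply (map_inj_on h (fun it => exists n, fst it = inr n)); auto.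
  intros [[d|n] q] [[e|m] q'] [n' Pa] [m' Pc] H; cbn [fst] in *; try discriminate.
  now inversion H.
Qed.

Lemma segment_small_max_some b g : max_index b = Some g -> small {l | lt_comb l b}.
Proof.
  intros Hb. apply (small_of_injects_Fcomb _ {v | ltW v (proj1_sig g)}); [|exact (proj2_sig g)].
  (* Indices below [g] are kept, [g] itself becomes the tag 0 and tags are shifted. *)
  set (hi := fun it : Wsmall + nat => match it with
     | inl d => match excluded_middle_informative (ltW (proj1_sig d) (proj1_sig g)) with
                | left p => inl (exist (fun v => ltW v (proj1_sig g)) (proj1_sig d) p)
                | right _ => inr 0%nat end
     | inr n => inr (S n) end).
  set (P := fun it : (Wsmall + nat) * Q => match fst it with
     | inl d => ~ ltW (proj1_sig g) (proj1_sig d) | inr _ => True end).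
  assert (eq_g : forall d, ~ ltW (proj1_sig d) (proj1_sig g) ->
    ~ ltW (proj1_sig g) (proj1_sig d) -> d = g).
  { intros d H1 H2. apply sig_eq. destruct (totW (proj1_sig d) (proj1_sig g)) as [X|[X|X]];
      tauto. }
  assert (hP : forall a c, P a -> P c -> (hi (fst a), snd a) = (hi (fst c), snd c) -> a = c).
  { intros [[d|n] q] [[e|m] q'] Pa Pc H; unfold P in Pa, Pc; cbn [fst snd] in *;
      unfold hi in H; inversion H as [[H1 H2]]; subst; auto.
    - destruct (excluded_middle_informative (ltW (proj1_sig d) (proj1_sig g))) as [p1|p1];
      destruct (excluded_middle_informative (ltW (proj1_sig e) (proj1_sig g))) as [p2|p2];
      inversion H1 as [H3]; auto.
      + do 2 f_equal. now apply sig_eq.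
      + now rewrite (eq_g d), (eq_g e).
    - destruct (excluded_middle_informative (ltW (proj1_sig d) (proj1_sig g))); discriminate.
    - destruct (excluded_middle_informative (ltW (proj1_sig e) (proj1_sig g))); discriminate. }
  assert (segP : forall l, lt_comb l b -> Forall P l).
  { intros l Hl. apply Forall_forall. intros [[d|n] q] Hin; unfold P; cbn [fst]; auto.
    assert (A := max_index_below l b Hl d q Hin). rewrite Hb in A. intro X.
    destruct A as [A|A]; simpl in A.
    - apply (ltW_irrefl (proj1_sig g)). exact (proj1 (proj2 woW) _ _ _ X A).
    - inversion A; subst. exact (ltW_irrefl _ X). }
  exists (fun l => map (fun it => (hi (fst it), snd it)) (proj1_sig l)).
  intros [l1 H1] [l2 H2] E. apply sig_eq; simpl in *.
  apply (map_inj_on _ P hP); auto.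
Qed.

Lemma segment_small b : small {l | lt_comb l b}.
Proof.
  destruct (max_index b) as [g|] eqn:Hb.
  - exact (segment_small_max_some b g Hb).
  - exact (segment_small_max_none b Hb).
Qed.

(* Either every index has a small initial segment, or the least one without gives an
   injection of [R] into combinations of indices with small segments. *)
Lemma R_injects_Fcomb_Wsmall : injects R W -> injects R (Fcomb Wsmall).
Proof.
  intros [f Hf]. destruct (classic (forall w, small_below w)) as [all|nall].
  - exists (fun r => (inl (exist small_below (f r) (all (f r))), 0%Q) :: nil).
    intros x y H. inversion H. apply Hf; auto.
  - destruct (well_founded_min _ _ wfW (fun w => ~ small_below w)) as [b0 [Hb0 Hmin]].
    { apply NNPP; intro X; apply nall; intro w; apply NNPP; intro Y; apply X; eauto. }
    apply NNPP in Hb0. eapply injects_trans; [exact Hb0|]. apply injects_Fcomb_map.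
    exists (fun v : {v | ltW v b0} => exist small_below (proj1_sig v)
      (NNPP _ (Hmin (proj1_sig v) (proj2_sig v)))).
    intros x y H. apply sig_eq. now apply (f_equal (@proj1_sig _ _)) in H.
Qed.
End SmallSegments.

Theorem small_segments_order : exists (E : Type) (lt : E -> E -> Prop),
  strict_well_order lt /\ injects R E /\ forall b, small {g : E | lt g b}.
Proof.
  destruct (WellOrdering.strict_well_order_exists R) as [ltW woW].
  destruct (WellOrdering.strict_well_order_exists (Fcomb (Wsmall R ltW))) as [ltZ woZ].
  exists (Fcomb (Wsmall R ltW)), (lt_comb R ltW ltZ).
  split; [now apply lt_comb_strict_well_order|]. split.
  - apply R_injects_Fcomb_Wsmall; auto. exists (fun r => r); auto.
  - now apply segment_small.
Qed.

(** * The transversal *)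

Definition sumQR (l : list (Q * R)) : R := fold_right (fun p s => Q2R (fst p) * snd p + s) 0 l.

Lemma sumQR_cons p l : sumQR (p :: l) = Q2R (fst p) * snd p + sumQR l.
Proof. reflexivity. Qed.

Lemma sumQR_app l1 l2 : sumQR (l1 ++ l2) = sumQR l1 + sumQR l2.
Proof. induction l1 as [|p l1 IH]; simpl; [ring|]. unfold sumQR in *; simpl. rewrite IH. ring. Qed.

Definition qspan {X : Type} (f : X -> R) (y : R) : Prop :=
  exists l : list (Q * X), y = fold_right (fun p acc => Q2R (fst p) * f (snd p) + acc) 0 l.

Lemma qspan_scale_sumQR {X} (f : X -> R) c (l : list (Q * R)) :
  (forall p, In p l -> exists g, f g = snd p) -> qspan f (Q2R c * sumQR l).
Proof.
  induction l as [|p l IH]; intros H.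
  - exists nil. simpl. ring.
  - destruct (H p (or_introl eq_refl)) as [g Hg].
    destruct IH as [lst Hl]; [intros p' Hp'; apply H; now right|].
    exists (((c * fst p)%Q, g) :: lst). simpl. rewrite <- Hl, Q2R_mult, Hg.
    unfold sumQR; simpl. ring.
Qed.

(* Values of combinations: the tag 0 carries a rational constant, other tags count as 0. *)
Definition eval_Fcomb {X : Type} (f : X -> R) (l : Fcomb X) : R :=
  fold_right (fun it acc => match it with
    | (inl g, q) => Q2R q * f g
    | (inr O, q) => Q2R q
    | (inr (S _), _) => 0 end + acc) 0 l.

Lemma eval_Fcomb_app {X} (f : X -> R) l1 l2 :
  eval_Fcomb f (l1 ++ l2) = eval_Fcomb f l1 + eval_Fcomb f l2.
Proof.
  induction l1 as [|p l1 IH]; simpl; [ring|]. unfold eval_Fcomb in *; simpl. rewrite IH. ring.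
Qed.

Lemma eval_Fcomb_map {X} (f : X -> R) (l : list (Q * X)) :
  eval_Fcomb f (map (fun p => (inl (snd p), fst p)) l) =
  fold_right (fun p acc => Q2R (fst p) * f (snd p) + acc) 0 l.
Proof. induction l as [|p l IH]; simpl; auto. unfold eval_Fcomb in *; simpl. now rewrite IH. Qed.

Lemma countable_sub (A B : set) : subset A B -> countable B -> countable A.
Proof. intros HAB [f Hf]. exists f. auto. Qed.

Lemma lin_indep_Q_sub (A B : set) : subset A B -> lin_indep_Q B -> lin_indep_Q A.
Proof.
  intros HAB HB l Hnd Hl Hs. apply HB; auto. eapply Forall_impl; [|exact Hl]. auto.
Qed.

Lemma exists_max_in_list {A B} (lt : B -> B -> Prop) (m : A -> B) (l : list A) :
  (forall a b c, lt a b -> lt b c -> lt a c) -> (forall a b, lt a b \/ a = b \/ lt b a) ->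
  l <> nil -> exists a, In a l /\ forall b, In b l -> lt (m b) (m a) \/ m b = m a.
Proof.
  intros tr tot. induction l as [|a l IH]; intros H; [congruence|].
  destruct l as [|a' l].
  - exists a; split; [now left|]. intros b [Hb|[]]; subst; auto.
  - destruct IH as [c [Hc Hmax]]; [discriminate|].
    destruct (tot (m a) (m c)) as [h|[h|h]].
    + exists c; split; [now right|]. intros b [Hb|Hb]; subst; auto.
    + exists c; split; [now right|]. intros b [Hb|Hb]; subst; auto.
    + exists a; split; [now left|]. intros b [Hb|Hb]; subst; auto.
      destruct (Hmax b Hb) as [h'|h']; left; [eauto|congruence].
Qed.

Section Transversal.
Variable I : set -> Prop.
Hypothesis HI : standing_assumptions I.
Variables (L : set) (fL : R -> R).
Hypotheses (fL_in : forall r, L (fL r)) (fL_inj : forall a b, fL a = fL b -> a = b).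
Hypothesis L_null : forall A, I A -> countable (fun x => L x /\ A x).

(* Otherwise each point of [L] either has a rational translate in [B], hence in the span,
   which codes it, or lies in the member [~ Qsat B] of [I], which meets [L] countably; so [R]
   would inject into the combinations over [X]. *)
Lemma exists_Qtranslate_outside_span (X : Type) (f : X -> R) (B : set) :
  small X -> borel B -> ~ I B -> exists y, Qtranslates L y /\ B y /\ ~ qspan f y.
Proof.
  intros HX hB nB.
  destruct (L_null _ (Qsat_compl_null I HI B hB nB)) as [cN HcN].
  apply NNPP; intro H.
  assert (Hsp : forall y, Qtranslates L y -> B y -> qspan f y).
  { intros y H1 H2. apply NNPP; intro H3. apply H; eauto. }
  apply HX.
  assert (rep : forall r, exists l : Fcomb X,
     (eval_Fcomb f l = fL r /\
        exists lst q, l = map (fun p => (inl (snd p), fst p)) lst ++ (inr 0%nat, q) :: nil)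
     \/ (~ Qsat B (fL r) /\ l = (inr (S (cN (fL r))), 1%Q) :: nil)).
  { intro r. destruct (classic (Qsat B (fL r))) as [[q Hq]|Hq].
    - destruct (Hsp (fL r + Q2R q)) as [lst Hl]; [now exists (fL r), q|auto|].
      exists (map (fun p => (inl (snd p), fst p)) lst ++ (inr 0%nat, (- q)%Q) :: nil).
      left. split; [|eauto]. rewrite eval_Fcomb_app, eval_Fcomb_map, <- Hl.
      unfold eval_Fcomb; simpl. rewrite Q2R_opp. ring.
    - exists ((inr (S (cN (fL r))), 1%Q) :: nil). now right. }
  destruct (choice _ rep) as [c Hc]. exists c. intros r1 r2 Heq.
  destruct (Hc r1) as [[E1 [lst1 [q1 D1]]]|[N1 D1]];
  destruct (Hc r2) as [[E2 [lst2 [q2 D2]]]|[N2 D2]]; rewrite D1, D2 in Heq.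
  - apply fL_inj. now rewrite <- E1, <- E2, D1, D2, Heq.
  - apply app_eq_unit in Heq. destruct Heq as [[_ X']|[_ X']]; discriminate.
  - symmetry in Heq. apply app_eq_unit in Heq. destruct Heq as [[_ X']|[_ X']]; discriminate.
  - inversion Heq. apply fL_inj, HcN; auto.
Qed.

Variables (E : Type) (lt : E -> E -> Prop) (code : E -> bcode) (j : R -> E).
Hypotheses (lt_wo : strict_well_order lt) (segment_small : forall b, small {g | lt g b}).
Hypotheses (j_inj : forall r r', j r = j r' -> r = r')
  (code_fibers : forall c, ~ countable (fun r => code (j r) = c)).

Let lt_wf := proj1 lt_wo.
Let lt_trans := proj1 (proj2 lt_wo).
Let lt_total := proj2 (proj2 lt_wo).

Definition target (b : E) : set :=
  if excluded_middle_informative (borel (decode (code b)) /\ ~ I (decode (code b)))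
  then decode (code b) else full.

Lemma target_borel_nonnull b : borel (target b) /\ ~ I (target b).
Proof.
  unfold target. destruct (excluded_middle_informative _) as [H|H]; auto.
  destruct HI as [_ [nfull _]]. split; auto.
  apply borel_open. intros x _. exists 1; split; [lra|]. now intros.
Qed.

Definition next_point (b : E) (rec : forall g, lt g b -> R) : R :=
  let f := fun g : {g | lt g b} => rec (proj1_sig g) (proj2_sig g) in
  match excluded_middle_informative (exists y, Qtranslates L y /\ target b y /\ ~ qspan f y)
  with
  | left H => proj1_sig (constructive_indefinite_description _ H)
  | right _ => 0
  end.

Definition point : E -> R := Fix lt_wf (fun _ => R) next_point.

Lemma point_eq b : point b = next_point b (fun g _ => point g).
Proof.
  unfold point. refine (Fix_eq lt_wf (fun _ => R) next_point _ b). intros b' f g H.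
  unfold next_point.
  replace f with g; [reflexivity|].
  apply functional_extensionality_dep; intro y;
  apply functional_extensionality_dep; intro p; auto.
Qed.

Lemma point_spec b : Qtranslates L (point b) /\ target b (point b) /\
  ~ qspan (fun g : {g | lt g b} => point (proj1_sig g)) (point b).
Proof.
  rewrite point_eq. unfold next_point. destruct (excluded_middle_informative _) as [H|H].
  - exact (proj2_sig (constructive_indefinite_description _ H)).
  - exfalso. apply H. destruct (target_borel_nonnull b) as [hB nB].
    now apply exists_Qtranslate_outside_span.
Qed.

Lemma point_inj a b : point a = point b -> a = b.
Proof.
  intros H. destruct (lt_total a b) as [h|[h|h]]; auto; exfalso.
  - apply (proj2 (proj2 (point_spec b))). exists ((1%Q, exist _ a h) :: nil). simpl.
    rewrite RMicromega.Q2R_1, H. ring.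
  - apply (proj2 (proj2 (point_spec a))). exists ((1%Q, exist _ b h) :: nil). simpl.
    rewrite RMicromega.Q2R_1, H. ring.
Qed.

Definition transversal : set := fun y => exists r, y = point (j r).

Lemma transversal_card : card_continuum transversal.
Proof.
  exists (fun r => point (j r)). split; [intros r; now exists r|]. split.
  - intros a b H. now apply j_inj, point_inj.
  - intros y [r Hr]; eauto.
Qed.

Lemma transversal_null A : I A -> countable (fun y => transversal y /\ A y).
Proof.
  intros HA. apply (countable_sub _ (fun y => Qtranslates L y /\ A y)).
  - intros y [[r ->] Ay]. split; [apply point_spec|exact Ay].
  - now apply (Qtranslates_countable_null I HI).
Qed.

Lemma transversal_meets_borel B :
  borel B -> ~ I B -> ~ countable (fun y => transversal y /\ B y).
Proof.
  intros hB nB [g Hg]. destruct (borel_decode B hB) as [c Hc].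
  apply (code_fibers c). exists (fun r => g (point (j r))). intros a b Ha Hb H.
  assert (inB : forall r, code (j r) = c -> B (point (j r))).
  { intros r Hr. destruct (point_spec (j r)) as [_ [T _]]. unfold target in T.
    rewrite Hr, Hc in T. destruct (excluded_middle_informative _) as [_|n]; auto.
    exfalso; apply n; auto. }
  apply j_inj, point_inj, Hg; [split; [now exists a|auto]|split; [now exists b|auto]|exact H].
Qed.

Lemma coeff_zero_of_points_below b q (l : list (Q * R)) :
  (forall p, In p l -> exists g, lt g b /\ point g = snd p) ->
  Q2R q * point b + sumQR l = 0 -> Qeq q 0.
Proof.
  intros Hl Hs. apply NNPP; intro Hq.
  assert (HR : Q2R q <> 0) by (intro h; apply Hq, eqR_Qeq; now rewrite RMicromega.Q2R_0).
  apply (proj2 (proj2 (point_spec b))).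
  replace (point b) with (Q2R (- / q) * sumQR l).
  - apply qspan_scale_sumQR. intros p Hp. destruct (Hl p Hp) as [g [hg Hg]].
    now exists (exist _ g hg).
  - rewrite Q2R_opp, Q2R_inv by auto. replace (sumQR l) with (- (Q2R q * point b)) by lra.
    now field.
Qed.

Definition index_of (y : R) : E :=
  match excluded_middle_informative (exists b, point b = y) with
  | left H => proj1_sig (constructive_indefinite_description _ H)
  | right _ => j 0
  end.

Lemma point_index_of y : (exists b, point b = y) -> point (index_of y) = y.
Proof.
  intros H. unfold index_of. destruct (excluded_middle_informative _) as [H'|H'];
    [|contradiction].
  exact (proj2_sig (constructive_indefinite_description _ H')).
Qed.

Lemma point_combination_trivial n (l : list (Q * R)) : (length l <= n)%nat ->
  NoDup (map snd l) -> Forall (fun p => exists b, point b = snd p) l -> sumQR l = 0 ->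
  Forall (fun p => Qeq (fst p) 0) l.
Proof.
  revert l; induction n as [|n IH]; intros l Hlen Hnd Hx Hs.
  { destruct l; simpl in Hlen; [constructor|lia]. }
  destruct l as [|p l']; [constructor|].
  destruct (exists_max_in_list lt (fun p => index_of (snd p)) (p :: l') lt_trans lt_total)
    as [p0 [Hp0 Hmax]]; [discriminate|].
  destruct (in_split _ _ Hp0) as [l1 [l2 Hsplit]]. rewrite Hsplit in *. clear Hsplit p l'.
  rewrite Forall_forall in Hx.
  assert (in_l : forall p, In p (l1 ++ l2) -> In p (l1 ++ p0 :: l2)).
  { intros p Hp. apply in_app_or in Hp. apply in_or_app. simpl. tauto. }
  assert (Hnd' := Hnd). rewrite map_app in Hnd'. simpl in Hnd'.
  assert (below : forall p, In p (l1 ++ l2) ->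
            exists g, lt g (index_of (snd p0)) /\ point g = snd p).
  { intros p Hp. exists (index_of (snd p)).
    rewrite (point_index_of _ (Hx p (in_l p Hp))). split; auto.
    destruct (Hmax p (in_l p Hp)) as [h|h]; auto. exfalso.
    apply (NoDup_remove_2 _ _ _ Hnd'). rewrite <- map_app.
    replace (snd p0) with (snd p); [now apply in_map|].
    now rewrite <- (point_index_of _ (Hx p (in_l p Hp))), h, point_index_of by
      (apply Hx; apply in_or_app; simpl; auto). }
  rewrite sumQR_app, sumQR_cons in Hs.
  assert (Hq0 : Qeq (fst p0) 0).
  { apply (coeff_zero_of_points_below _ _ (l1 ++ l2) below).
    rewrite point_index_of by (apply Hx; apply in_or_app; simpl; auto).
    rewrite sumQR_app. lra. }
  assert (Hrest : Forall (fun p => Qeq (fst p) 0) (l1 ++ l2)).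
  { apply IH.
    - rewrite length_app in *. simpl in Hlen. lia.
    - rewrite map_app. eapply NoDup_remove_1; eauto.
    - apply Forall_forall. intros p Hp. apply Hx, in_l, Hp.
    - assert (Q2R (fst p0) = 0) by (rewrite <- RMicromega.Q2R_0; now apply Qeq_eqR).
      rewrite sumQR_app. nra. }
  apply Forall_app in Hrest as [H1 H2]. apply Forall_app. split; [exact H1|]. now constructor.
Qed.

Lemma transversal_lin_indep : lin_indep_Q transversal.
Proof.
  apply (lin_indep_Q_sub _ (fun y => exists b, point b = y)).
  - intros y [r ->]. eauto.
  - intros l Hnd Hl Hs. now apply (point_combination_trivial (length l)).
Qed.
End Transversal.

Theorem mainTheorem12 (I : set -> Prop) :
  standing_assumptions I ->
  (exists L, I_Luzin I L) ->
  exists L, strong_I_Luzin I L /\ lin_indep_Q L.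
Proof.
  intros HI [L [[fL [fL_in [fL_inj _]]] L_null]].
  destruct small_segments_order as [E [lt [lt_wo [[j j_inj] segment_small]]]].
  destruct bcode_uncountable_fibers as [k k_fibers].
  destruct (left_inverse j 0%R j_inj) as [s Hs].
  assert (fibers : forall c, ~ countable (fun r => k (s (j r)) = c)).
  { intros c. rewrite (set_ext _ (fun r => k r = c)); [apply k_fibers|].
    intro r. now rewrite Hs. }
  exists (transversal I L E lt (fun b => k (s b)) j lt_wo). split; [split; [split|]|].
  - now apply (transversal_card I HI L fL).
  - now apply (transversal_null I HI L fL).
  - now apply (transversal_meets_borel I HI L fL).
  - now apply (transversal_lin_indep I HI L fL).
Qed.
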